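(* Let $X$ be a locally compact metric space and $\Gamma$ a pseudo*group of local homeomorphisms of $X$ which is minimal and equicontinuous. Let $X_0$ be a relatively compact open subset of $X$, and fix $\chi\in C_c(X)_{>0}$ with $\chi=1$ on $X_0$. For $\zeta\in C_c(X)_{\ge0}$ and $\psi\in C_c(X)_{>0}$ set $$(\zeta:\psi)=\inf\Big\{\sum_{i=1}^n c_i \;\Big|\; \zeta\le\sum_{i=1}^n c_i\,\psi\circ\gamma_i^{-1},\ c_i>0,\ \gamma_i\in\Gamma,\ n\in\mathbb N\Big\}$$ and $L_\psi(\zeta)=(\zeta:\psi)/(\chi:\psi)$. If $\eta>0$ and $\xi,\xi'\in C_c(X)_{\ge0}$ satisfy $\xi+\xi'=\chi$, then there is $\delta>0$ such that for every $\psi\in C_c(X)_{>0}$ with $\mathrm{diam}(\mathrm{supp}\,\psi)<\delta$ and every $\zeta\in C_c(X_0)_{\ge0}$ we have $$L_\psi(\xi\zeta)+L_\psi(\xi'\zeta)\le(1+2\eta)L_\psi(\zeta).$$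
   Context: A local homeomorphism of $X$ is a homeomorphism $\gamma$ from an open subset $\mathrm{Dom}(\gamma)$ onto an open subset $\mathrm{Range}(\gamma)$. A pseudo*group is a set $\Gamma$ of local homeomorphisms such that: (1) if $\gamma\in\Gamma$ and $U\subset\mathrm{Dom}(\gamma)$ is open then $\gamma|_U\in\Gamma$; (2) the identity of $X$ is in $\Gamma$; (3) if $\gamma,\gamma'\in\Gamma$ and $\mathrm{Dom}(\gamma')=\mathrm{Range}(\gamma)$ then $\gamma'\circ\gamma\in\Gamma$; (4) if $\gamma\in\Gamma$ then $\gamma^{-1}\in\Gamma$. Minimal: every orbit $\{\gamma x\mid\gamma\in\Gamma,x\in\mathrm{Dom}(\gamma)\}$ is dense. Equicontinuous: for every $\epsilon>0$ there is $\delta(\epsilon)>0$ with $d(\gamma x,\gamma x')\le\epsilon$ whenever $\gamma\in\Gamma$, $x,x'\in\mathrm{Dom}(\gamma)$, $d(x,x')<\delta(\epsilon)$. $C_c(X)$ is the space of real continuous compactly supported functions on $X$; $C_c(X)_{\ge0}=\{\zeta\in C_c(X)\mid\zeta\ge0\}$; $C_c(X)_{>0}=\{\zeta\in C_c(X)_{\ge0}\mid\zeta(x)>0$ for some $x\}$; $C_c(X_0)_{\ge0}$ denotes the nonnegative continuous functions with compact support contained in $X_0$ (viewed as functions on $X$ vanishing outside $X_0$). For $\psi\in C_c(X)$ and $\gamma\in\Gamma$, $\psi\circ\gamma^{-1}$ denotes the function on $X$ equal to $\psi(\gamma^{-1}x)$ on $\mathrm{Range}(\gamma)$ and $0$ outside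 $\mathrm{Range}(\gamma)$. *)

From HB Require Import structures.
From mathcomp Require Import all_boot all_order all_algebra.
From mathcomp Require Import all_classical all_reals all_analysis.
Set Implicit Arguments. Unset Strict Implicit. Unset Printing Implicit Defensive.
Import Order.TTheory GRing.Theory Num.Theory.
Import numFieldTopology.Exports.
Local Open Scope classical_set_scope.
Local Open Scope ring_scope.

(* A local homeomorphism of X: a homeomorphism from the open set lh_dom onto
   the open set lh_fun @` lh_dom, represented by a total function lh_fun
   (only its values on lh_dom matter) together with its inverse lh_inv
   (only its values on the range matter). *)
Record lhomeo (X : topologicalType) := LHomeo {
  lh_dom : set X;
  lh_fun : X -> X;
  lh_inv : X -> X;
  lh_dom_open : open lh_dom;
  lh_range_open : open (lh_fun @` lh_dom);
  lh_invK : forall x, lh_dom x -> lh_inv (lh_fun x) = x;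
  lh_fun_cont : {within lh_dom, continuous lh_fun};
  lh_inv_cont : {within lh_fun @` lh_dom, continuous lh_inv}
}.

Definition lh_range (X : topologicalType) (g : lhomeo X) : set X :=
  lh_fun g @` lh_dom g.

(* Pseudo*group axioms (1)-(4); a local homeomorphism is determined by its
   domain and its values on it, so membership is stated up to that. *)
Definition pseudo_star_group (X : topologicalType) (G : set (lhomeo X)) : Prop :=
  [/\ (forall g U, G g -> open U -> U `<=` lh_dom g ->
         exists2 h, G h & lh_dom h = U /\ forall x, U x -> lh_fun h x = lh_fun g x),
      (exists2 h, G h & lh_dom h = setT /\ forall x, lh_fun h x = x),
      (forall g g', G g -> G g' -> lh_dom g' = lh_range g ->
         exists2 h, G h & lh_dom h = lh_dom g /\
           forall x, lh_dom g x -> lh_fun h x = lh_fun g' (lh_fun g x))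
    & (forall g, G g ->
         exists2 h, G h & lh_dom h = lh_range g /\
           forall y, lh_range g y -> lh_fun h y = lh_inv g y)].

Definition orbit (X : topologicalType) (G : set (lhomeo X)) (x : X) : set X :=
  [set y | exists2 g, G g & lh_dom g x /\ y = lh_fun g x].

Definition minimal_pg (X : topologicalType) (G : set (lhomeo X)) : Prop :=
  forall x, dense (orbit G x).

Definition equicontinuous_pg (R : realType) (X : metricType R)
    (G : set (lhomeo X)) : Prop :=
  forall eps : R, 0 < eps -> exists2 del : R, 0 < del &
    forall g x x', G g -> lh_dom g x -> lh_dom g x' -> mdist x x' < del ->
      mdist (lh_fun g x) (lh_fun g x') <= eps.

Definition locally_compact_space (X : topologicalType) : Prop :=
  forall x : X, exists2 U, nbhs x U & compact U.

Definition supp (R : realType) (X : topologicalType) (f : X -> R) : set X :=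
  closure [set x | f x != 0].

Definition Cc (R : realType) (X : topologicalType) (f : X -> R) : Prop :=
  continuous f /\ compact (supp f).
Definition Cc_nonneg (R : realType) (X : topologicalType) (f : X -> R) : Prop :=
  Cc f /\ forall x, 0 <= f x.
Definition Cc_pos (R : realType) (X : topologicalType) (f : X -> R) : Prop :=
  Cc_nonneg f /\ exists x, 0 < f x.
Definition Cc_nonneg_in (R : realType) (X : topologicalType) (X0 : set X)
    (f : X -> R) : Prop :=
  Cc_nonneg f /\ supp f `<=` X0.

(* psi o g^{-1}, extended by 0 outside Range(g) *)
Definition comp_inv (R : realType) (X : topologicalType) (psi : X -> R)
    (g : lhomeo X) : X -> R :=
  fun y => if `[< lh_range g y >] then psi (lh_inv g y) else 0.

Definition covering_number (R : realType) (X : topologicalType)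
    (G : set (lhomeo X)) (zeta psi : X -> R) : R :=
  inf [set s : R | exists (n : nat) (c : nat -> R) (g : nat -> lhomeo X),
         [/\ forall i, (i < n)%N -> 0 < c i,
             forall i, (i < n)%N -> G (g i),
             forall x, zeta x <= \sum_(i < n) c i * comp_inv psi (g i) x
           & s = \sum_(i < n) c i]].

Definition L_psi (R : realType) (X : topologicalType) (G : set (lhomeo X))
    (chi psi zeta : X -> R) : R :=
  covering_number G zeta psi / covering_number G chi psi.

Definition diam (R : realType) (X : metricType R) (A : set X) : R :=
  sup [set d : R | exists x y, [/\ A x, A y & d = mdist x y]].

(* Fix a cover zeta <= sum_i c_i psi o g_i^-1.  Once diam (supp psi) is
   small, equicontinuity makes every bump psi o g_i^-1 live on a set of small
   diameter, on which xi and xi' oscillate by at most eta (uniform continuity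
   on the compact closure of X0).  Evaluating xi and xi' at a point y_i of the
   bump where zeta > 0 gives covers of xi zeta and xi' zeta with weights
   c_i (xi y_i + eta) and c_i (xi' y_i + eta), whose total is at most
   (1 + 2 eta) sum_i c_i because xi y_i + xi' y_i = chi y_i = 1.  If zeta has
   no cover at all, neither has chi (as zeta <= (max zeta + 1) chi), so
   (chi : psi) = 0 and all the L_psi vanish, as x / 0 = 0. *)
From HB Require Import structures.
From mathcomp Require Import all_boot all_order all_algebra.
From mathcomp Require Import all_classical all_reals all_analysis.
From mathcomp Require Import lra.
Set Implicit Arguments. Unset Strict Implicit. Unset Printing Implicit Defensive.
Import Order.TTheory GRing.Theory Num.Theory.
Import numFieldTopology.Exports.
Local Open Scope classical_set_scope.
Local Open Scope ring_scope.

Lemma continuous_compact_bounded (R : realType) (X : topologicalType)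
    (f : X -> R) (K : set X) :
  continuous f -> compact K -> exists M, forall x, K x -> `|f x| <= M.
Proof.
move=> cf cK.
have cfK : compact (f @` K).
  by apply: continuous_compact => //; exact: continuous_subspaceT.
have [M [_ HM]] := compact_bounded cfK.
exists (M + 1) => x Kx.
by apply: (HM (M + 1)); [rewrite ltrDl ltr01 | exists x].
Qed.

Lemma Cc_le_scale (R : realType) (X : topologicalType) (zeta chi : X -> R)
    (A : set X) :
  Cc zeta -> supp zeta `<=` A -> (forall x, A x -> chi x = 1) ->
  (forall x, 0 <= chi x) -> exists2 k, 0 < k & forall x, zeta x <= k * chi x.
Proof.
move=> [czeta czsupp] zA chi1 chi0.
have [M HM] := continuous_compact_bounded czeta czsupp.
have k0 : 0 < `|M| + 1 by exact: ltr_wpDl (normr_ge0 M) ltr01.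
exists (`|M| + 1) => // x; have [zx|zx] := ltP 0 (zeta x); last first.
  by apply: le_trans zx _; rewrite mulr_ge0 ?chi0 ?ltW.
have sx : supp zeta x by apply: subset_closure; rewrite /= gt_eqF.
rewrite chi1; last exact: zA.
have := HM x sx; have := ler_norm M; have := ler_norm (zeta x); lra.
Qed.

Section MetricFacts.
Variables (R : realType) (X : metricType R).

Lemma mdist_continuous (x0 : X) : continuous (fun y : X => mdist x0 y).
Proof.
move=> x; apply/cvgrPdist_lt => e e0.
have : nbhs x (ball x e) by exact: nbhsx_ballx.
apply: filterS => y; rewrite ballEmdist /= => hxy.
have t1 := metric_triangle x0 x y.
have t2 := metric_triangle x0 y x; rewrite (metric_sym y x) in t2.
rewrite ltr_distlC; apply/andP; split; lra.
Qed.

Lemma mdist_le_diam (A : set X) x y :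
  compact A -> A x -> A y -> mdist x y <= diam A.
Proof.
move=> cA Ax Ay; apply: ub_le_sup; last by exists x, y.
have [M HM] := continuous_compact_bounded (@mdist_continuous x) cA.
exists (M + M) => _ [a [b [Aa Ab ->]]].
apply: le_trans (metric_triangle a x b) _; rewrite metric_sym.
by apply: lerD; apply: le_trans (ler_norm _) (HM _ _).
Qed.

Lemma continuous_compact_uniform_le (f : X -> R) (K : set X) (e : R) :
  continuous f -> compact K -> 0 < e ->
  exists2 d : R, 0 < d & forall y x, K y -> mdist y x <= d -> f x <= f y + e.
Proof.
move=> cf cK e0.
pose P (d : R) (y : X) := forall x, mdist y x < d -> f x <= f y + e.
have nearP : \forall d \near (0 : R)^'+, K `<=` P d.
  apply: (proj1 (compact_near_coveringP K) cK) => y Ky.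
  have /cvgrPdist_lt /(_ (e / 2) (divr_gt0 e0 (ltr0Sn _ 1))) := cf y.
  rewrite -metricType_numDomainType.nbhs_nbhs_mdist => -[r /= r0 Hr].
  have r20 : 0 < r / 2 by rewrite divr_gt0.
  exists (ball y (r / 2), [set d : R | 0 < d < r / 2]) => /=.
    split; first exact: nbhsx_ballx.
    by near=> d; apply/andP; split; near: d; [exact: nbhs_right_gt|exact: nbhs_right_lt].
  case=> y' d [/= yy' /andP[d0 dr]] x y'x.
  rewrite ballEmdist /= in yy'.
  have ty := metric_triangle y y' x.
  have yy'r : mdist y y' < r by lra.
  have yxr : mdist y x < r by lra.
  have := Hr y' yy'r; have := Hr x yxr.
  rewrite !ltr_distlC => /andP[? ?] /andP[? ?]; lra.
have [d [d0 KP]] : exists d, 0 < d /\ K `<=` P d.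
  by near (0 : R)^'+ => d; exists d; split; near: d; [exact: nbhs_right_gt|].
exists (d / 2) => [|y x /KP Py yx]; first by rewrite divr_gt0.
by apply: Py; lra.
Unshelve. all: by end_near.
Qed.

End MetricFacts.

Section CoveringNumber.
Variables (R : realType) (X : topologicalType) (G : set (lhomeo X)).

Definition is_cover (z p : X -> R) n (c : nat -> R) (g : nat -> lhomeo X) :=
  [/\ forall i, (i < n)%N -> 0 < c i,
      forall i, (i < n)%N -> G (g i)
    & forall x, z x <= \sum_(i < n) c i * comp_inv p (g i) x].

Lemma comp_inv_ge0 (p : X -> R) g x :
  (forall y, 0 <= p y) -> 0 <= comp_inv p g x.
Proof. by move=> p0; rewrite /comp_inv; case: ifP. Qed.

Lemma cover_weight_ge0 n (c : nat -> R) :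
  (forall i, (i < n)%N -> 0 < c i) -> 0 <= \sum_(i < n) c i.
Proof. by move=> cp; apply: sumr_ge0 => i _; exact/ltW/cp. Qed.

Lemma covering_number_le_sum z p n c g :
  is_cover z p n c g -> covering_number G z p <= \sum_(i < n) c i.
Proof.
move=> [cp gG cov]; apply: ge_inf; last by exists n, c, g.
by exists 0 => _ [m [c' [g' [cp' _ _ ->]]]]; exact: cover_weight_ge0.
Qed.

Lemma covering_number_ge0 (z p : X -> R) : 0 <= covering_number G z p.
Proof.
rewrite /covering_number; set S := [set s | _].
have [->|/set0P neS] := eqVneq S set0; first by rewrite inf0.
by apply: lb_le_inf => // _ [m [c' [g' [cp' _ _ ->]]]]; exact: cover_weight_ge0.
Qed.

Lemma covering_number_ge (z p : X -> R) (B : R) :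
  (exists n c g, is_cover z p n c g) ->
  (forall n c g, is_cover z p n c g -> B <= \sum_(i < n) c i) ->
  B <= covering_number G z p.
Proof.
move=> [n [c [g [cp gG cov]]]] Ble; apply: lb_le_inf.
  by exists (\sum_(i < n) c i), n, c, g.
move=> _ /= [m [c' [g' [cp' gG' cov' ->]]]]; exact: (Ble m c' g').
Qed.

Lemma covering_number_nocover (z p : X -> R) :
  ~ (exists n c g, is_cover z p n c g) -> covering_number G z p = 0.
Proof.
move=> nocov; rewrite /covering_number; set S := [set s | _].
suff -> : S = set0 by rewrite inf0.
apply/seteqP; split => // _ /= [m [c' [g' [cp' gG' cov' _]]]].
by apply: nocov; exists m, c', g'.
Qed.

Lemma covering_number_dominated_nocover (z z' p : X -> R) (k : R) :
  0 < k -> (forall x, z x <= k * z' x) ->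
  ~ (exists n c g, is_cover z p n c g) -> covering_number G z' p = 0.
Proof.
move=> k0 zle nocov; apply: covering_number_nocover => -[n [c [g [cp gG cov]]]].
apply: nocov; exists n, (fun i => k * c i), g; split => //.
  by move=> i lt; rewrite mulr_gt0 ?cp.
move=> x; apply: le_trans (zle x) _.
under eq_bigr do rewrite -mulrA.
by rewrite -mulr_sumr ler_pM2l.
Qed.

Lemma covering_number_mul_le (h z p : X -> R) n c g (a : nat -> R) :
  (forall x, 0 <= h x) -> (forall x, 0 <= p x) -> is_cover z p n c g ->
  (forall i, (i < n)%N -> 0 < a i) ->
  (forall i x, (i < n)%N -> 0 < z x -> comp_inv p (g i) x != 0 -> h x <= a i) ->
  covering_number G (fun x => h x * z x) p <= \sum_(i < n) c i * a i.
Proof.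
move=> h0 p0 [cp gG cov] a0 hle.
apply: (@covering_number_le_sum _ _ n (fun i => c i * a i) g); split => //.
  by move=> i lt; rewrite mulr_gt0 ?cp ?a0.
move=> x; have [zx|zx] := ltP 0 (z x); last first.
  apply: le_trans (mulr_ge0_le0 (h0 x) zx) _.
  apply: sumr_ge0 => i _.
  by rewrite !mulr_ge0 ?comp_inv_ge0 ?ltW ?cp ?a0.
apply: le_trans (ler_wpM2l (h0 x) (cov x)) _.
rewrite mulr_sumr; apply: ler_sum => i _.
have [->|pne] := eqVneq (comp_inv p (g i) x) 0; first by rewrite !mulr0.
rewrite mulrCA -[c i * a i * _]mulrA ler_pM2l ?cp //.
by apply: ler_wpM2r; [exact: comp_inv_ge0|exact: hle].
Qed.

End CoveringNumber.

Section PartitionEstimate.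
Variables (R : realType) (X : topologicalType) (G : set (lhomeo X)).
Variables (psi zeta xi xi' : X -> R) (eta : R).
Hypotheses (eta0 : 0 < eta) (psi0 : forall x, 0 <= psi x).
Hypotheses (xi0 : forall x, 0 <= xi x) (xi'0 : forall x, 0 <= xi' x).
Hypothesis xi_sum1 : forall y, 0 < zeta y -> xi y + xi' y = 1.
Hypothesis xi_osc : forall g, G g -> forall x y, 0 < zeta y ->
  comp_inv psi g x != 0 -> comp_inv psi g y != 0 ->
  xi x <= xi y + eta /\ xi' x <= xi' y + eta.

Lemma bump_weights (g : lhomeo X) : exists ab : R * R, G g ->
  [/\ 0 <= ab.1, 0 <= ab.2, ab.1 + ab.2 <= 1
    & forall x, 0 < zeta x -> comp_inv psi g x != 0 ->
        xi x <= ab.1 + eta /\ xi' x <= ab.2 + eta].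
Proof.
have [[y [zy py]]|noS] :=
  pselect (exists y, 0 < zeta y /\ comp_inv psi g y != 0).
  exists (xi y, xi' y) => Gg; split => //=; first by rewrite xi_sum1.
  by move=> x _ px; exact: xi_osc Gg x y zy px py.
exists (0, 0) => _; split => //= x zx px.
by case: noS; exists x.
Qed.

Lemma covering_number_partition_cover n c g : is_cover G zeta psi n c g ->
  covering_number G (fun x => xi x * zeta x) psi
  + covering_number G (fun x => xi' x * zeta x) psi
  <= (1 + 2 * eta) * \sum_(i < n) c i.
Proof.
move=> cov; have [ab Hab] := choice bump_weights.
have [cp gG _] := cov.
have Hi i (lt_in : (i < n)%N) := Hab (g i) (gG i lt_in).
have le1 := covering_number_mul_le (a := fun i => (ab (g i)).1 + eta) xi0 psi0 cov.
have le2 := covering_number_mul_le (a := fun i => (ab (g i)).2 + eta) xi'0 psi0 cov.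
apply: le_trans (lerD (le1 _ _) (le2 _ _)) _.
- by move=> i /Hi[a0 _ _ _]; exact: ltr_wpDl a0 eta0.
- by move=> i x /Hi[_ _ _ osc] zx px; case: (osc x zx px).
- by move=> i /Hi[_ a'0 _ _]; exact: ltr_wpDl a'0 eta0.
- by move=> i x /Hi[_ _ _ osc] zx px; case: (osc x zx px).
rewrite -big_split mulr_sumr ler_sum // => i _.
have [_ _ ab1 _] := Hi i (ltn_ord i).
rewrite /= -mulrDr mulrC ler_pM2r ?cp //.
by move: ab1; set a := (ab (g i)).1; set a' := (ab (g i)).2; lra.
Qed.

Lemma covering_number_partition_le :
  (exists n c g, is_cover G zeta psi n c g) ->
  covering_number G (fun x => xi x * zeta x) psi
  + covering_number G (fun x => xi' x * zeta x) psi
  <= (1 + 2 * eta) * covering_number G zeta psi.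
Proof.
have eta1 : 0 < 1 + 2 * eta by have := eta0; lra.
move=> hcov; rewrite -ler_pdivrMl //; apply: covering_number_ge => // n c g cov.
by rewrite ler_pdivrMl //; exact: covering_number_partition_cover cov.
Qed.

End PartitionEstimate.

Lemma comp_inv_support_mdist (R : realType) (X : metricType R) (psi : X -> R)
    (g : lhomeo X) (del eps : R) x y :
  compact (supp psi) -> diam (supp psi) < del ->
  (forall u v, lh_dom g u -> lh_dom g v -> mdist u v < del ->
     mdist (lh_fun g u) (lh_fun g v) <= eps) ->
  comp_inv psi g x != 0 -> comp_inv psi g y != 0 -> mdist x y <= eps.
Proof.
move=> cpsupp hdiam equi; rewrite /comp_inv.
case: asboolP => [[u du <-]|_]; last by rewrite eqxx.
case: asboolP => [[v dv <-]|_]; last by rewrite eqxx.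
rewrite !lh_invK // => pu pv.
apply: equi => //; apply: le_lt_trans hdiam.
by apply: mdist_le_diam => //; exact: subset_closure.
Qed.

Theorem lemma1 (R : realType) (X : metricType R) (G : set (lhomeo X))
    (X0 : set X) (chi : X -> R) (eta : R) (xi xi' : X -> R) :
  locally_compact_space X ->
  pseudo_star_group G -> minimal_pg G -> equicontinuous_pg G ->
  open X0 -> compact (closure X0) ->
  Cc_pos chi -> (forall x, X0 x -> chi x = 1) ->
  0 < eta -> Cc_nonneg xi -> Cc_nonneg xi' ->
  (forall x, xi x + xi' x = chi x) ->
  exists2 del : R, 0 < del &
    forall psi : X -> R, Cc_pos psi -> diam (supp psi) < del ->
    forall zeta : X -> R, Cc_nonneg_in X0 zeta ->
      L_psi G chi psi (fun x => xi x * zeta x)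
      + L_psi G chi psi (fun x => xi' x * zeta x)
      <= (1 + 2 * eta) * L_psi G chi psi zeta.
Proof.
move=> _ _ _ equi _ cX0 [[_ chi0] _] chi1 eta0 [[cxi _] xi0] [[cxi' _] xi'0] xi_sum.
have [d1 d10 Hd1] := continuous_compact_uniform_le cxi cX0 eta0.
have [d2 d20 Hd2] := continuous_compact_uniform_le cxi' cX0 eta0.
have d0 : 0 < Num.min d1 d2 by rewrite lt_min d10 d20.
have [del del0 Hdel] := equi _ d0.
exists del => // psi [[[_ cpsupp] psi0] _] hdiam zeta [[Czeta _] zX0].
have zeta_X0 x : 0 < zeta x -> X0 x.
  by move=> zx; apply/zX0/subset_closure; rewrite /= gt_eqF.
have xi_osc g : G g -> forall x y, 0 < zeta y -> comp_inv psi g x != 0 ->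
    comp_inv psi g y != 0 -> xi x <= xi y + eta /\ xi' x <= xi' y + eta.
  move=> Gg x y /zeta_X0/subset_closure X0y px py.
  have := comp_inv_support_mdist cpsupp hdiam (fun u v => Hdel g u v Gg) py px.
  by rewrite le_min => /andP[yx1 yx2]; split; [exact: Hd1|exact: Hd2].
have xi_sum1 y : 0 < zeta y -> xi y + xi' y = 1.
  by move=> /zeta_X0 /chi1 <-; exact: xi_sum.
rewrite /L_psi; have [hcov|nocov] := pselect (exists n c g, is_cover G zeta psi n c g).
  rewrite -mulrDl mulrA ler_wpM2r ?invr_ge0 ?covering_number_ge0 //.
  exact: covering_number_partition_le.
have [k k0 zle] := Cc_le_scale Czeta zX0 chi1 chi0.
by rewrite (covering_number_dominated_nocover k0 zle nocov) !invr0 !mulr0 addr0.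
Qed.
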